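(* Let $G$, $k$, $\epsilon$, $M$ be as in the standing setting. Then $G$ contains none of the following configurations: (C1) a vertex $u$ with $d(u)\le 1$; (C2) a path $w_1u_1u_2w_2$ with $d(u_1)=d(u_2)=2$, $d(w_1)\le k-1$ and $d(w_2)\le k-2$; (C3) a vertex $u$ with $3\le d(u)\le M$ whose neighbors are $v_1,\dots,v_{d(u)-2},x,y$, where each $v_i$ has degree $2$ and its other neighbor $w_i$ satisfies $d(w_i)\le M$ (the $w_i$ need not be distinct from each other or from $x,y$), and $d(x)+d(y)\le k-M+2$.
   Context: Standing setting: let $0<\epsilon\le 1/20$, $M=6/\epsilon$, and let $k$ be an integer with $k\ge 3/\epsilon^2$ (so $k\ge 3M$). Let $G$ be a finite simple graph with $\Delta(G)\le k$ such that the square of $G$ is not list $(k+1)$-colorable, while the square of every proper subgraph of $G$ is list $(k+1)$-colorable. Here the square of a graph has the same vertex set, two distinct vertices being adjacent iff they are adjacent or have a common neighbor; it is list $(k+1)$-colorable if for every assignment of lists of $k+1$ colors to the vertices there is a proper coloring of the square from the lists. $d(v)$ denotes the degree of $v$ in $G$. *)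

From HB Require Import structures.
From mathcomp Require Import all_boot all_order all_algebra.
Set Implicit Arguments. Unset Strict Implicit. Unset Printing Implicit Defensive.
Import Order.TTheory GRing.Theory Num.Theory.

Definition simple_graph (T : finType) (e : rel T) : Prop :=
  symmetric e /\ irreflexive e.

Definition deg (T : finType) (e : rel T) (v : T) : nat := #|[set w | e v w]|.

Definition subgraph (T : finType) (e : rel T) (S : {set T}) (f : rel T) : Prop :=
  symmetric f /\ (forall u v, f u v -> e u v) /\
  (forall u v, f u v -> u \in S /\ v \in S).

Definition proper_subgraph (T : finType) (e : rel T) (S : {set T}) (f : rel T) : Prop :=
  subgraph e S f /\ (S != setT \/ exists u v, e u v && ~~ f u v).

Definition sq_adj (T : finType) (S : {set T}) (f : rel T) (u v : T) : bool :=
  (u != v) && (f u v || [exists w in S, f u w && f w v]).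

Definition sq_list_colorable (T : finType) (S : {set T}) (f : rel T) (n : nat) : Prop :=
  forall L : T -> seq nat,
    (forall v, v \in S -> uniq (L v) /\ size (L v) = n) ->
    exists c : T -> nat,
      (forall v, v \in S -> c v \in L v) /\
      (forall u v, u \in S -> v \in S -> sq_adj S f u v -> c u != c v).

From HB Require Import structures.
From mathcomp Require Import all_boot all_order all_algebra.
From mathcomp Require Import lra zify.
Set Implicit Arguments. Unset Strict Implicit. Unset Printing Implicit Defensive.
Import Order.TTheory GRing.Theory Num.Theory.

(* Each of
   the configurations (C1)-(C3) is reducible: delete a few vertices, colour the
   rest from the lists by minimality, then colour the deleted vertices
   greedily, each of them seeing at most k already coloured vertices in G^2.
*)

Lemma card_bigcup_le (T I : finType) (P : pred I) (F : I -> {set T}) :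
  #|\bigcup_(i | P i) F i| <= \sum_(i | P i) #|F i|.
Proof.
apply: (big_rec2 (fun n (B : {set T}) => #|B| <= n)); first by rewrite cards0.
by move=> i n B _ hB; rewrite cardsU (leq_trans (leq_subr _ _)) ?leq_add2l.
Qed.

Section SquareColoring.
Variables (T : finType) (e : rel T).
Hypothesis e_sym : symmetric e.

Local Notation sqadj := (sq_adj [set: T] e).

Definition nbr (v : T) : {set T} := [set w | e v w].

Lemma deg_ge2 v a b : e v a -> e v b -> a != b -> 2 <= deg e v.
Proof.
move=> eva evb neq_ab; have <- : #|[set a; b]| = 2 by rewrite cards2 neq_ab.
by apply: subset_leq_card; apply/subsetP => z; rewrite !inE => /orP[] /eqP ->.
Qed.

Lemma nbr_deg2 v a b :
  deg e v = 2 -> e v a -> e v b -> a != b -> nbr v = [set a; b].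
Proof.
move=> dv eva evb neq_ab; apply/esym/eqP; rewrite eqEcard cards2 neq_ab.
rewrite -[#|nbr v|]/(deg e v) dv leqnn andbT.
by apply/subsetP => z; rewrite !inE => /orP[] /eqP ->.
Qed.

Lemma sq_adj_sym u v : sqadj u v -> sqadj v u.
Proof.
rewrite /sq_adj eq_sym e_sym => /andP[-> /orP[->//|/existsP[w /and3P[_ h1 h2]]]].
by apply/orP; right; apply/existsP; exists w; rewrite in_setT /= e_sym h2 e_sym h1.
Qed.

(* Every square-neighbour w of v lies in a |: (nbr a :\ v) for some neighbour a
   of v; hence the number of square-neighbours in A is a sum over nbr v. *)
Lemma card_sq_nbrs_le (A : {set T}) v :
  #|[set w in A | sqadj v w]| <=
  \sum_(a in nbr v) #|(a |: (nbr a :\ v)) :&: A|.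
Proof.
apply: leq_trans (card_bigcup_le _ _); apply: subset_leq_card; apply/subsetP => w.
rewrite inE => /andP[wA /andP[nvw /orP[evw|/existsP[a /and3P[_ eva eaw]]]]].
  by apply/bigcupP; exists w; rewrite !inE ?evw ?wA ?eqxx.
apply/bigcupP; exists a; first by rewrite inE.
by rewrite !inE wA eaw (eq_sym w v) nvw orbT.
Qed.

(* A neighbour a of v contributes at most d(a): itself and d(a) - 1 others. *)
Lemma card_through_le a v (A : {set T}) : e v a ->
  #|(a |: (nbr a :\ v)) :&: A| <= deg e a.
Proof.
move=> eva; apply: leq_trans (subset_leq_card (subsetIl _ _)) _.
have va : v \in nbr a by rewrite inE e_sym.
by rewrite cardsU1 /deg -/(nbr a) (cardsD1 v (nbr a)) va leq_add2r leq_b1.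
Qed.

Lemma card_through_le_out a v (A : {set T}) : e v a -> a \notin A ->
  #|(a |: (nbr a :\ v)) :&: A| <= (deg e a).-1.
Proof.
move=> eva aA; have va : v \in nbr a by rewrite inE e_sym.
rewrite /deg -/(nbr a) (cardsD1 v (nbr a)) va /=.
apply: subset_leq_card; apply/subsetP => z; rewrite !inE.
by case: (eqVneq z a) => [->|_ /andP[]//]; rewrite (negbTE aA) andbF.
Qed.

Lemma card_sq_nbrs_le_sum_deg (A : {set T}) v :
  #|[set w in A | sqadj v w]| <= \sum_(a in nbr v) deg e a.
Proof.
apply: leq_trans (card_sq_nbrs_le A v) _; apply: leq_sum => a.
by rewrite inE => /card_through_le; apply.
Qed.

Lemma deg2_nbr w a b z :
  deg e w = 2 -> e a w -> e w b -> a != b -> e w z -> (z == a) || (z == b).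
Proof.
rewrite e_sym => dw wa wb nab wz.
by have := nbr_deg2 dw wa wb nab; move/setP/(_ z); rewrite !inE wz.
Qed.

Lemma free_color (s : seq nat) (B : {set T}) (c : T -> nat) :
  uniq s -> #|B| < size s -> exists2 col, col \in s & forall w, w \in B -> c w != col.
Proof.
move=> uniq_s small_B.
have [/hasP[col col_s col_free] | /hasPn all_used] :=
  boolP (has (fun col => col \notin map c (enum B)) s).
  by exists col => // w wB; apply: contraNneq col_free => <-; rewrite map_f ?mem_enum.
have := uniq_leq_size uniq_s (fun col col_s => negbNE (all_used col col_s)).
by rewrite size_map -cardE leqNgt small_B.
Qed.

Definition sq_coloring (L : T -> seq nat) (A : {set T}) (c : T -> nat) : Prop :=
  (forall v, v \in A -> c v \in L v) /\
  (forall u v, u \in A -> v \in A -> sqadj u v -> c u != c v).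

Lemma greedy_step (L : T -> seq nat) n (A : {set T}) c v :
  uniq (L v) -> size (L v) = n.+1 -> sq_coloring L A c ->
  #|[set w in A | sqadj v w]| <= n ->
  exists c', sq_coloring L (v |: A) c'.
Proof.
move=> uniq_Lv size_Lv [cL cP] few.
have [|col col_Lv col_free] := free_color c uniq_Lv (B := [set w in A | sqadj v w]).
  by rewrite size_Lv ltnS.
exists (fun z => if z == v then col else c z); split.
  by move=> z; rewrite !inE; case: (eqVneq z v) => [->|_] //=; apply: cL.
have new_ok w : w \in A -> sqadj v w -> col != c w.
  by move=> wA vw; rewrite eq_sym col_free // inE wA.
move=> z1 z2; rewrite !inE.
case: (eqVneq z1 v) => [->|_]; case: (eqVneq z2 v) => [->|_] //=.
- by rewrite /sq_adj eqxx.
- by move=> _ z2A; apply: new_ok.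
- by move=> z1A _ /sq_adj_sym vz1; rewrite eq_sym new_ok.
- exact: cP.
Qed.

Lemma greedy_extend (L : T -> seq nat) n (A B : {set T}) c :
  (forall v, uniq (L v) /\ size (L v) = n.+1) -> sq_coloring L A c ->
  (forall v, v \in B -> #|[set w | sqadj v w]| <= n) ->
  exists c', sq_coloring L (A :|: B) c'.
Proof.
move=> okL; rewrite -(set_enum B); elim: (enum B) A c => [|v s IH] A c colA small.
  by exists c; suff -> : A :|: [set x in [::]] = A by []; apply/setP => x; rewrite !inE orbF.
have [uniq_Lv size_Lv] := okL v.
have [|c1 colAv] := greedy_step uniq_Lv size_Lv colA.
  have small_v : #|[set w | sqadj v w]| <= n by apply: small; rewrite !inE eqxx.
  apply: leq_trans small_v.
  by apply: subset_leq_card; apply/subsetP => w; rewrite !inE => /andP[].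
have [|c2 col2] := IH _ _ colAv.
  by move=> w; rewrite inE => ws; apply: small; rewrite !inE ws orbT.
exists c2; suff -> : A :|: [set x in v :: s] = (v |: A) :|: [set x in s] by [].
by apply/setP => x; rewrite !inE orbA (orbC (x \in A)).
Qed.

Lemma coloring_from_minimality (L : T -> seq nat) n (S A0 : {set T}) :
  (forall S f, proper_subgraph e S f -> sq_list_colorable S f n) ->
  (forall v, uniq (L v) /\ size (L v) = n) ->
  S != setT -> A0 \subset S ->
  (forall a b w, a \in A0 -> b \in A0 -> a != b -> e a w -> e w b -> w \in S) ->
  exists c, sq_coloring L A0 c.
Proof.
move=> minimal okL S_proper A0S mid_in_S.
pose f := [rel a b | [&& e a b, a \in S & b \in S]].
have sub_f : proper_subgraph e S f.
  split; [split; [|split]|by left].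
  - by move=> a b /=; rewrite e_sym (andbC (a \in S)).
  - by move=> a b /and3P[].
  - by move=> a b /and3P[].
have [c [cL cP]] := minimal _ _ sub_f L (fun v _ => okL v).
exists c; split=> [v /(subsetP A0S)/cL //|a b aA bA /andP[nab ab_adj]].
have [aS bS] := (subsetP A0S a aA, subsetP A0S b bA).
apply: cP => //; rewrite /sq_adj nab /= aS bS !andbT.
case/orP: ab_adj => [-> //|/existsP[w /and3P[_ aw wb]]].
have wS : w \in S by apply: (mid_in_S a b).
by apply/orP; right; apply/existsP; exists w; rewrite /= aw wb wS.
Qed.

Lemma sq_list_colorable_total n :
  (forall L, (forall v, uniq (L v) /\ size (L v) = n) -> exists c, sq_coloring L [set: T] c) ->
  sq_list_colorable [set: T] e n.
Proof. by move=> col L okL; apply: col => v; apply: okL. Qed.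

Section Reducible.
Variable k : nat.
Hypothesis deg_le : forall v, deg e v <= k.
Hypothesis minimal :
  forall S f, proper_subgraph e S f -> sq_list_colorable S f k.+1.

(* (C1): remove u; it has at most one neighbour, hence at most k
   square-neighbours. *)
Lemma reducible_C1 u : deg e u <= 1 -> sq_list_colorable [set: T] e k.+1.
Proof.
move=> du; apply: sq_list_colorable_total => L okL.
have [|||c colS] := coloring_from_minimality minimal okL (S := [set~ u]) (A0 := [set~ u]).
- by apply/eqP => /setP/(_ u); rewrite !inE eqxx.
- exact: subxx.
- move=> a b w _ _ nab aw wb; rewrite !inE; apply: contraTneq du => wu.
  by rewrite -ltnNge -wu (deg_ge2 _ wb nab) // e_sym.
have [|c' col'] := greedy_step (okL u).1 (okL u).2 colS.
  apply: leq_trans (card_sq_nbrs_le_sum_deg _ u) _.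
  apply: leq_trans (_ : _ <= \sum_(a in nbr u) k) _; first exact: leq_sum.
  by rewrite sum_nat_const -[#|_|]/(deg e u) (leq_trans (leq_mul du (leqnn k))) ?mul1n.
by rewrite setUCr in col'; exists c'.
Qed.

(* (C2): remove u1 and u2, then colour u1 (seeing at most d(w1) + 1 coloured
   vertices) and u2 (seeing at most d(u1) + d(w2) = d(w2) + 2). *)
Lemma reducible_C2 w1 u1 u2 w2 :
  uniq [:: w1; u1; u2; w2] -> e w1 u1 -> e u1 u2 -> e u2 w2 ->
  deg e u1 = 2 -> deg e u2 = 2 -> deg e w1 + 1 <= k -> deg e w2 + 2 <= k ->
  sq_list_colorable [set: T] e k.+1.
Proof.
rewrite /= !inE !negb_or => /and4P[/and3P[nw1u1 nw1u2 _] /andP[nu1u2 nu1w2] nu2w2 _].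
move=> w1u1 u1u2 u2w2 du1 du2 dw1 dw2.
have u1w1 : e u1 w1 by rewrite e_sym.
have u2u1 : e u2 u1 by rewrite e_sym.
apply: sq_list_colorable_total => L okL.
pose S := ~: [set u1; u2].
have [|||c colS] := coloring_from_minimality minimal okL (S := S) (A0 := S).
- by apply/eqP => /setP/(_ u1); rewrite !inE eqxx.
- exact: subxx.
- move=> a b w; rewrite !inE !negb_or => /andP[au1 au2] /andP[bu1 bu2] nab aw wb.
  apply/andP; split; apply/eqP => wu; subst w.
  + by have := deg2_nbr du1 aw wb nab u1u2; rewrite !(eq_sym u2) (negbTE au2) (negbTE bu2).
  + by have := deg2_nbr du2 aw wb nab u2u1; rewrite !(eq_sym u1) (negbTE au1) (negbTE bu1).
have nbr_u1 : nbr u1 = [set w1; u2] by rewrite (nbr_deg2 du1 u1w1 u1u2) // eq_sym.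
have nbr_u2 : nbr u2 = [set u1; w2] by rewrite (nbr_deg2 du2 u2u1 u2w2).
have [|c1 col1] := greedy_step (okL u1).1 (okL u1).2 colS.
  apply: leq_trans (card_sq_nbrs_le _ u1) _.
  rewrite nbr_u1 big_setU1 ?inE //= big_set1.
  have u2S : u2 \notin S by rewrite !inE eqxx orbT.
  apply: leq_trans dw1; rewrite leq_add ?card_through_le //.
  by rewrite -[1]/(2.-1) -du2 card_through_le_out.
have [|c2 col2] := greedy_step (okL u2).1 (okL u2).2 col1.
  apply: leq_trans (card_sq_nbrs_le _ u2) _.
  rewrite nbr_u2 big_setU1 ?inE //= big_set1.
  by apply: leq_trans dw2; rewrite addnC -du1 leq_add ?card_through_le.
exists c2; suff <- : u2 |: (u1 |: S) = [set: T] by [].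
by apply/setP => x; rewrite !inE; case: (x == u2); case: (x == u1).
Qed.

(* (C3): remove the degree-2 neighbours v_i of u and then u; colour u first,
   then the v_i, whose square-degree is at most 2M. *)
Section ConfigurationC3.
Local Open Scope ring_scope.
Variables (M : rat) (u x y : T).
Hypothesis M_small : M *+ 2 <= k%:R.
Hypothesis deg_u : (3 <= deg e u)%N.
Hypothesis deg_u_M : (deg e u)%:R <= M.
Hypotheses (neq_xy : x != y) (ux : e u x) (uy : e u y).
Hypothesis twig_prop : forall v, e u v -> v != x -> v != y ->
  deg e v = 2%N /\ (forall w, e v w -> w != u -> (deg e w)%:R <= M).
Hypothesis deg_xy : (deg e x + deg e y)%:R <= k%:R - M + 2.

(* The degree-2 neighbours v_i of u, i.e. all neighbours other than x and y. *)
Definition twigs : {set T} := [set v | [&& e u v, v != x & v != y]].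

Lemma twigsP v : reflect [/\ e u v, v != x & v != y] (v \in twigs).
Proof. by rewrite inE; apply: and3P. Qed.

(* Since d(u) >= 3, there is at least one twig, so removing them is proper. *)
Lemma twigs_nonempty : exists v, v \in twigs.
Proof.
apply/set0Pn; apply: contraTneq deg_u => no_twig; rewrite -ltnNge ltnS.
have <- : #|[set x; y]| = 2%N by rewrite cards2 neq_xy.
apply: subset_leq_card; apply/subsetP => v; rewrite !inE => uv.
apply: contraT; rewrite negb_or => /andP[vx vy].
by have := in_set0 v; rewrite -no_twig inE uv vx vy.
Qed.

(* Each twig sees at most 2M <= k vertices in the square. *)
Lemma twig_sq_degree v : v \in twigs -> (#|[set w | sqadj v w]| <= k)%N.
Proof.
case/twigsP => uv vx vy; have [dv deg_w] := twig_prop uv vx vy.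
have -> : [set w | sqadj v w] = [set w in [set: T] | sqadj v w].
  by apply/setP => w; rewrite !inE.
apply: leq_trans (card_sq_nbrs_le_sum_deg _ v) _; rewrite -(ler_nat rat) natr_sum.
apply: le_trans (_ : _ <= \sum_(a in nbr v) M) _.
  apply: ler_sum => a; rewrite inE => va.
  by have [->|nau] := eqVneq a u; [exact: deg_u_M | exact: deg_w].
by rewrite sumr_const -[#|_|]/(deg e v) dv.
Qed.

Lemma nbr_hub : nbr u = x |: (y |: twigs).
Proof.
apply/setP => v; rewrite !inE.
have [->|vx] := eqVneq v x; first by rewrite ux.
have [->|vy] := eqVneq v y; first by rewrite uy orbT.
by rewrite andbT.
Qed.

(* Counting through x, y and the twigs (each contributing its other end only),
   u has at most d(x) + d(y) + d(u) - 2 <= k coloured square-neighbours. *)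
Lemma hub_sq_degree : (#|[set w in ~: twigs :\ u | sqadj u w]| <= k)%N.
Proof.
have sum_le : (deg e x + deg e y + deg e u <= k + 2)%N.
  by rewrite -(ler_nat rat) !natrD; move: deg_u_M deg_xy; rewrite natrD; lra.
have x_out : x \notin y |: twigs by rewrite !inE negb_or neq_xy eqxx !andbF.
have y_out : y \notin twigs by rewrite !inE eqxx !andbF.
have deg_hub : deg e u = (#|twigs| + 2)%N.
  by rewrite /deg -/(nbr u) nbr_hub !cardsU1 x_out y_out addn2.
have twig_term a : a \in twigs -> (#|(a |: (nbr a :\ u)) :&: (~: twigs :\ u)| <= 1)%N.
  case/twigsP => ua ax ay; have [da _] := twig_prop ua ax ay.
  by rewrite -[1%N]/(2.-1)%N -da card_through_le_out // !inE ua ax ay andbF.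
apply: leq_trans (card_sq_nbrs_le _ u) _.
rewrite nbr_hub !big_setU1 //=.
have := leq_sum (index_enum T) twig_term; rewrite sum1_card.
move: (card_through_le (~: twigs :\ u) ux) (card_through_le (~: twigs :\ u) uy).
lia.
Qed.

Lemma reducible_C3 : sq_list_colorable [set: T] e k.+1.
Proof.
apply: sq_list_colorable_total => L okL.
have [v0 v0_twig] := twigs_nonempty.
have [|||c colA] := coloring_from_minimality minimal okL
                      (S := ~: twigs) (A0 := ~: twigs :\ u).
- by apply/eqP => /setP/(_ v0); rewrite in_setC v0_twig in_setT.
- exact: subsetDl.
- move=> a b w /setD1P[au _] /setD1P[bu _] nab aw wb; rewrite in_setC.
  apply/negP => /twigsP[uw wx wy]; have [dw _] := twig_prop uw wx wy.
  have wu : e w u by rewrite e_sym.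
  have := deg2_nbr dw aw wb nab wu.
  by rewrite !(eq_sym u) (negbTE au) (negbTE bu).
have [|c1 col1] := greedy_step (okL u).1 (okL u).2 colA; first exact: hub_sq_degree.
have [c2 col2] := greedy_extend okL col1 twig_sq_degree.
exists c2; suff <- : (u |: (~: twigs :\ u)) :|: twigs = [set: T] by [].
apply/setP => v; rewrite !in_setU in_setD1 in_setC in_set1 in_setT.
by case: (v == u); case: (v \in twigs).
Qed.

End ConfigurationC3.
End Reducible.

End SquareColoring.

Local Open Scope ring_scope.

Lemma twice_M_le_k (R : realFieldType) (eps : R) (k : nat) :
  0 < eps -> eps <= 1 / 4 -> 3 / eps ^+ 2 <= k%:R -> (6 / eps) *+ 2 <= k%:R.
Proof.
move=> eps_pos eps_small k_big; apply: le_trans k_big.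
have inv_pos : 0 < eps^-1 by rewrite invr_gt0.
have inv_eps : eps * eps^-1 = 1 by rewrite mulfV // gt_eqF.
rewrite -exprVn expr2 mulr2n; move: inv_pos inv_eps; set t := eps^-1 => ? ?.
nra.
Qed.

Theorem lemma2 (eps : rat) (k : nat) (T : finType) (e : rel T) :
  0 < eps -> eps <= 1 / 20 ->
  3 / (eps ^+ 2) <= k%:R ->
  simple_graph e ->
  (forall v, (deg e v <= k)%N) ->
  ~ sq_list_colorable [set: T] e k.+1 ->
  (forall S f, proper_subgraph e S f -> sq_list_colorable S f k.+1) ->
  let M : rat := 6 / eps in
  (* (C1) *)
  ~ (exists u, (deg e u <= 1)%N) /\
  (* (C2) *)
  ~ (exists w1 u1 u2 w2 : T,
       [/\ uniq [:: w1; u1; u2; w2], e w1 u1, e u1 u2 & e u2 w2] /\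
       [/\ deg e u1 = 2%N, deg e u2 = 2%N,
           (deg e w1 + 1 <= k)%N & (deg e w2 + 2 <= k)%N]) /\
  (* (C3) *)
  ~ (exists u x y : T,
       [/\ (3 <= deg e u)%N, (deg e u)%:R <= M,
           x != y, e u x & e u y] /\
       (forall v, e u v -> v != x -> v != y ->
          deg e v = 2%N /\
          (forall w, e v w -> w != u -> (deg e w)%:R <= M)) /\
       (deg e x + deg e y)%:R <= k%:R - M + 2).
Proof.
move=> eps_pos eps_small k_big [e_sym _] deg_le not_colorable minimal M.
have M_small : M *+ 2 <= k%:R.
  by apply: twice_M_le_k k_big; rewrite // (le_trans eps_small).
split; [|split].
- case=> u deg_u; apply: not_colorable.
  exact (reducible_C1 e_sym deg_le minimal deg_u).
- case=> w1 [u1 [u2 [w2 [[path_uniq w1u1 u1u2 u2w2] [du1 du2 dw1 dw2]]]]].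
  apply: not_colorable.
  exact (reducible_C2 e_sym minimal path_uniq w1u1 u1u2 u2w2 du1 du2 dw1 dw2).
- case=> u [x [y [[du3 duM nxy ux uy] [twigs_deg dxy]]]]; apply: not_colorable.
  exact (reducible_C3 e_sym minimal M_small du3 duM nxy ux uy twigs_deg dxy).
Qed.
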